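(* Let $\phi$ be an affine equivariant integrator map, let $F\colon Y\to Z$ be a Gâteaux differentiable map between Banach spaces, let $f\in\mathfrak{X}(Y)$, and let $g\in\mathfrak{X}(Y\times Z)$ be the augmented vector field $g(y,z)=\bigl(f(y),F'(y)f(y)\bigr)$. Write $\widetilde f=\phi(f)$ and $\widetilde g=\phi(g)$. Then $\widetilde g(\widetilde y,\widetilde z)=\widetilde g\bigl(\widetilde y,F(\widetilde y)\bigr)$ for all $(\widetilde y,\widetilde z)\in Y\times Z$. Consequently, the condition $$\widetilde g\bigl(\widetilde y,F(\widetilde y)\bigr)=\bigl(\widetilde f(\widetilde y),F'(\widetilde y)\widetilde f(\widetilde y)\bigr)\quad\text{for all }\widetilde y\in Y$$ holds if and only if $\widetilde g(\widetilde y,\widetilde z)=\bigl(\widetilde f(\widetilde y),F'(\widetilde y)\widetilde f(\widetilde y)\bigr)$ for all $(\widetilde y,\widetilde z)\in Y\times Z$.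
   Context: All spaces are real Banach spaces; $\mathfrak{X}(Y)$ denotes the set of smooth vector fields on $Y$ (smooth maps $Y\to Y$). An integrator map $\phi$ is a collection of smooth maps $\phi_Y\colon\mathfrak{X}(Y)\to\mathfrak{X}(Y)$, one for each Banach space $Y$; one writes $\phi(f)=\phi_Y(f)$. For a Gâteaux differentiable map $\chi\colon Y\to U$, vector fields $f\in\mathfrak{X}(Y)$ and $g\in\mathfrak{X}(U)$ are $\chi$-related, written $f\sim_\chi g$, if $\chi'(y)f(y)=g(\chi(y))$ for all $y\in Y$. An integrator map $\phi$ is affine equivariant if for every affine map $A\colon Y\to U$ between Banach spaces, $f\sim_A g$ implies $\phi(f)\sim_A\phi(g)$. *)

From HB Require Import structures.
From mathcomp Require Import all_boot all_order all_algebra.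
From mathcomp Require Import all_classical all_reals all_analysis.
Set Implicit Arguments. Unset Strict Implicit. Unset Printing Implicit Defensive.
Import Order.TTheory GRing.Theory Num.Theory.
Import numFieldNormedType.Exports.
Local Open Scope classical_set_scope.
Local Open Scope ring_scope.

Section prod_complete.
Context {R : realType} {U V : completeNormedModType R}.
Lemma prod_complete (F : set_system ((U * V)%type : normedModType R)) : ProperFilter F -> cauchy F -> cvg F.
Proof.
move=> FF Fc.
have c1 : cauchy (fst @ F).
  move=> E entE; rewrite near_simpl -near2E near_map2.
  have : entourage [set xy : (U * V) * (U * V) | E (xy.1.1, xy.2.1) /\ setT (xy.1.2, xy.2.2)].
    exact: (prod_entP entE entourageT).
  by move/Fc; apply: (filterS (P := fun xy => _)) => -[x y] [].
have c2 : cauchy (snd @ F).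
  move=> E entE; rewrite near_simpl -near2E near_map2.
  have : entourage [set xy : (U * V) * (U * V) | setT (xy.1.1, xy.2.1) /\ E (xy.1.2, xy.2.2)].
    exact: (prod_entP entourageT entE).
  by move/Fc; apply: (filterS (P := fun xy => _)) => -[x y] [].
have cv1 : fst @ F --> lim (fst @ F) by exact: cauchy_cvg.
have cv2 : snd @ F --> lim (snd @ F) by exact: cauchy_cvg.
have cv12 : (x.1, x.2) @[x --> F] --> (nbhs (lim (fst @ F)), nbhs (lim (snd @ F))).
  by apply: cvg_pair.
apply/cvg_ex; exists (lim (fst @ F), lim (snd @ F)).
move=> P /cv12; rewrite /= /fmap /= /nbhs /=.
by apply: filterS; case.
Qed.
End prod_complete.

(* The Banach space Y x Z (product norm = max norm). *)
Definition prodB (R : realType) (Y Z : completeNormedModType R) : completeNormedModType R :=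
  HB.pack_for (completeNormedModType R) ((Y * Z)%type : normedModType R)
    (Uniform_isComplete.Build ((Y * Z)%type : normedModType R) (@prod_complete R Y Z)).


Fixpoint smooth_n (R : realType) (V W : normedModType R) (n : nat)
  (f : V -> W) : Prop :=
  match n with
  | O => continuous f
  | S m => (forall x, differentiable f x) /\
           (forall v : V, smooth_n m (fun x => 'd f x v))
  end.

Definition smooth (R : realType) (V W : normedModType R) (f : V -> W) : Prop :=
  forall n, smooth_n n f.

Definition gateaux_differentiable (R : realType) (V W : normedModType R)
  (F : V -> W) : Prop :=
  forall y : V,
    (forall v : V, derivable F y v) /\
    (forall (a : R) (u v : V), 'D_(a *: u + v) F y = a *: 'D_u F y + 'D_v F y) /\
    continuous (fun v : V => 'D_v F y).

Definition related (R : realType) (V W : normedModType R)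
  (chi : V -> W) (f : V -> V) (g : W -> W) : Prop :=
  forall y : V, 'D_(f y) chi y = g (chi y).

Definition affine_map (R : realType) (V W : normedModType R) (A : V -> W) : Prop :=
  exists (L : {linear V -> W}) (c : W), continuous L /\ forall x, A x = L x + c.

Definition integrator_map (R : realType)
  (phi : forall Y : completeNormedModType R, (Y -> Y) -> (Y -> Y)) : Prop :=
  forall (Y : completeNormedModType R) (f : Y -> Y), smooth f -> smooth (phi Y f).

Definition affine_equivariant (R : realType)
  (phi : forall Y : completeNormedModType R, (Y -> Y) -> (Y -> Y)) : Prop :=
  forall (Y U : completeNormedModType R) (A : Y -> U) (f : Y -> Y) (g : U -> U),
    affine_map A -> smooth f -> smooth g ->
    related A f g -> related A (phi Y f) (phi U g).

From HB Require Import structures.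
From mathcomp Require Import all_boot all_order all_algebra.
From mathcomp Require Import all_classical all_reals all_analysis.
Import Order.TTheory GRing.Theory Num.Theory.
Import numFieldNormedType.Exports.
Local Open Scope ring_scope.

(* The augmented field g does not depend on z, so it is invariant under every
   translation (y, z) |-> (y, z + c); a translation is affine, hence by
   equivariance phi(g) is invariant under the same translations, and moving z
   to F y gives the first claim. *)

Section Translation.
Variables (R : realType) (V : normedModType R).

Lemma derive_shift_normed (k q v : V) : 'D_v (shift k) q = v.
Proof. by rewrite deriveD // derive_id derive_cst addr0. Qed.

Lemma affine_map_shift (k : V) : affine_map (shift k).
Proof.
exists (@idfun V : {linear V -> V}), k.
by split => // x; apply: cvg_id.
Qed.

Lemma related_shift (k : V) (f g : V -> V) :
  related (shift k) f g <-> forall q, g (q + k) = f q.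
Proof. by split => fg q; rewrite -fg /= derive_shift_normed. Qed.

End Translation.

Lemma affine_equivariant_shift_invariant {R : realType}
  {phi : forall Y : completeNormedModType R, (Y -> Y) -> (Y -> Y)}
  {Y : completeNormedModType R} {g : Y -> Y} {k : Y} :
  affine_equivariant phi -> smooth g -> (forall q, g (q + k) = g q) ->
  forall q, phi Y g (q + k) = phi Y g q.
Proof.
move=> equiv sg gk.
apply/related_shift; apply: equiv => //; first exact: affine_map_shift.
exact/related_shift.
Qed.

Theorem proposition2p5 (R : realType)
  (phi : forall Y : completeNormedModType R, (Y -> Y) -> (Y -> Y))
  (Y Z : completeNormedModType R) (F : Y -> Z) (f : Y -> Y) :
  integrator_map phi -> affine_equivariant phi ->
  gateaux_differentiable F ->
  smooth f ->
  smooth (fun p : Y * Z => (f p.1, 'D_(f p.1) F p.1)) ->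
  let g := fun p : Y * Z => (f p.1, 'D_(f p.1) F p.1) in
  let ft := phi Y f in
  let gt := phi (prodB Y Z) g in
  (forall (yt : Y) (zt : Z), gt (yt, zt) = gt (yt, F yt)) /\
  ((forall yt : Y, gt (yt, F yt) = (ft yt, 'D_(ft yt) F yt)) <->
   (forall (yt : Y) (zt : Z), gt (yt, zt) = (ft yt, 'D_(ft yt) F yt))).
Proof.
move=> _ equiv _ _ sg g ft gt.
have gt_indep_z (yt : Y) (zt : Z) : gt (yt, zt) = gt (yt, F yt).
  have g_shift (q : prodB Y Z) : g (q + (0, F yt - zt)) = g q.
    by rewrite /g /= addr0.
  have := affine_equivariant_shift_invariant (Y := prodB Y Z)
    equiv sg g_shift (yt, zt).
  have -> : ((yt, zt) : prodB Y Z) + (0, F yt - zt) = (yt, F yt).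
    by congr pair; rewrite ?addr0 // addrC subrK.
  by move=> H; exact: (esym H).
split => //; split => [gtF yt zt | gtYZ yt]; last exact: gtYZ.
by rewrite gt_indep_z gtF.
Qed.
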